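(* Let $\pi$ be an $r$-homogeneous strongly log-concave distribution with associated matroid $\mathcal{M}$, let $2\le k\le r$, let $f^{(k)}:\mathcal{M}(k)\to\mathbb{R}_{\ge0}$, and let $f^{(k-1)}=P^{\uparrow}_{k-1}f^{(k)}$, i.e. $f^{(k-1)}(J)=\sum_{I\in\mathcal{M}(k),I\supset J}\frac{w(I)}{w(J)}f^{(k)}(I)$ for $J\in\mathcal{M}(k-1)$. Then $$\mathrm{Ent}_{\pi_k}(f^{(k)})\ge\frac{k}{k-1}\,\mathrm{Ent}_{\pi_{k-1}}(f^{(k-1)}).$$
   Context: $\pi:2^{[n]}\to\mathbb{R}_{\ge0}$ has generating polynomial $g_\pi(x)=\sum_S\pi(S)\prod_{i\in S}x_i$; $r$-homogeneous means the support consists of $r$-sets; strongly log-concave means for every $J\subseteq[n]$, $\nabla^2\log(\partial_J g_\pi)$ is negative semidefinite at the all-ones vector. The support $\mathcal{B}$ is the set of bases of a rank-$r$ matroid $\mathcal{M}=(E,\mathcal{I})$; $\mathcal{M}(k)$ = independent sets of size $k$. Weights: $w(I)=(r-|I|)!\sum_{B\in\mathcal{B},B\supseteq I}\pi(B)$ for $I\in\mathcal{I}$; $\pi_k(I)=w(I)/\sum_{I'\in\mathcal{M}(k)}w(I')$ on $\mathcal{M}(k)$. $\mathrm{Ent}_\mu(f)=\mathbb{E}_\mu(f\log f)-\mathbb{E}_\mu f\log\mathbb{E}_\mu f$ with $0\log0=0$. *)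

From mathcomp Require Import all_boot all_order all_algebra.
From mathcomp Require Import reals exp.
From mathcomp Require Import mpoly.
Set Implicit Arguments. Unset Strict Implicit. Unset Printing Implicit Defensive.
Import Order.TTheory GRing.Theory Num.Theory.
Local Open Scope ring_scope.

Section SLC.
Variables (R : realType) (n : nat).
Implicit Types (pi : {set 'I_n} -> R) (S I J : {set 'I_n}).

Definition gen_poly pi : mpoly.mpoly n R :=
  \sum_(S : {set 'I_n}) pi S *: \prod_(i in S) @mpoly.mpolyX n R (mpoly.mnm1 i).

Definition partialJ J (p : mpoly.mpoly n R) : mpoly.mpoly n R :=
  foldr (fun i q => mpoly.mderiv i q) p (enum J).

Definition ev1 (p : mpoly.mpoly n R) : R := mpoly.meval (fun _ : 'I_n => (1 : R)) p.

(* entry (i,j) of the Hessian of log p at the all-ones vector: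
   d_i d_j log p = (d_i d_j p)/p - (d_i p)(d_j p)/p^2 *)
Definition hess_log1 (p : mpoly.mpoly n R) (i j : 'I_n) : R :=
  ev1 (mpoly.mderiv i (mpoly.mderiv j p)) / ev1 p
  - ev1 (mpoly.mderiv i p) * ev1 (mpoly.mderiv j p) / (ev1 p) ^+ 2.

Definition nsd (H : 'I_n -> 'I_n -> R) : Prop :=
  forall v : 'I_n -> R, \sum_i \sum_j v i * v j * H i j <= 0.

(* strongly log-concave: for all J, Hessian of log (d_J g) is NSD at 1
   (whenever d_J g does not vanish there, so that log is defined) *)
Definition strongly_log_concave pi : Prop :=
  forall J, 0 < ev1 (partialJ J (gen_poly pi)) ->
    nsd (hess_log1 (partialJ J (gen_poly pi))).

Definition is_distribution pi : Prop :=
  (forall S, 0 <= pi S) /\ \sum_S pi S = 1.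

Definition homogeneous (r : nat) pi : Prop :=
  forall S, pi S != 0 -> #|S| = r.

(* associated matroid: bases = support of pi; independent = subset of a basis *)
Definition indep pi I : bool := [exists B : {set 'I_n}, (0 < pi B) && (I \subset B)].

Definition Mk pi (k : nat) : {set {set 'I_n}} := [set I | indep pi I & #|I| == k].

Definition wgt (r : nat) pi I : R :=
  (r - #|I|)`!%:R * \sum_(B : {set 'I_n} | I \subset B) pi B.

Definition pik (r : nat) pi (k : nat) (I : {set 'I_n}) : R :=
  wgt r pi I / \sum_(I' in Mk pi k) wgt r pi I'.

Definition xlogx (x : R) : R := if x == 0 then 0 else x * ln x.

Definition Ent (A : {set {set 'I_n}}) (mu f : {set 'I_n} -> R) : R :=
  \sum_(I in A) mu I * xlogx (f I) - xlogx (\sum_(I in A) mu I * f I).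

Definition Pup (r : nat) pi (k : nat) (f : {set 'I_n} -> R) (J : {set 'I_n}) : R :=
  \sum_(I in Mk pi k | J \subset I) wgt r pi I / wgt r pi J * f I.

End SLC.

From mathcomp Require Import all_boot all_order all_algebra.
From mathcomp Require Import reals exp.
From mathcomp Require Import mpoly.
From mathcomp Require Import ring lra zify.
Import Order.TTheory GRing.Theory Num.Theory.
Set Implicit Arguments. Unset Strict Implicit. Unset Printing Implicit Defensive.
Local Open Scope ring_scope.

(* Push [f] down level by level, [f_j := P^up_j f_(j+1)]. The normalisation of
   [pi_j] makes the mean of [f_j] the same on every level, so it suffices that the
   level entropies [e_j := Ent_(pi_j) f_j] form a convex sequence with [e_0 = 0]:
   then [e_j / j] is nondecreasing. Convexity [2 e_(i+1) <= e_(i+2) + e_i] is checked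
   on each flag [K < x |: K < y |: x |: K] by Gibbs' inequality, which leaves a
   quadratic inequality in the values of [f_(i+1)] on the sets [x |: K]; that one is
   the strong log-concavity of [partial_K g_pi] at the all-ones vector. *)
Section UpperPoly.
Variables (R : realType) (n : nat).
Implicit Types (c : {set 'I_n} -> R) (S T K : {set 'I_n}) (x y : 'I_n).

Definition mnm_of_set S : 'X_{1..n} := (\sum_(i in S) U_(i))%MM.

Lemma mnm_of_setE S i : mnm_of_set S i = (i \in S).
Proof.
rewrite /mnm_of_set mnm_sumE.
under eq_bigr do rewrite mnm1E.
case: (boolP (i \in S)) => iS.
  rewrite (bigD1 i) //= eqxx big1 // => j /andP[_ /negPf]; by rewrite eq_sym => ->.
by rewrite big1 // => j jS; apply/eqP; rewrite eqb0; apply: contraNneq iS => <-.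
Qed.

Lemma mnm_of_setD1 S x : x \in S -> (mnm_of_set S - U_(x))%MM = mnm_of_set (S :\ x).
Proof.
move=> xS; apply/mnmP => i; rewrite mnmBE mnm1E !mnm_of_setE in_setD1.
by case: (eqVneq x i) => [<-|_]; rewrite ?xS //= subn0; case: (i \in S).
Qed.

Lemma mderivX_set S x :
  mderiv x ('X_[mnm_of_set S] : {mpoly R[n]}) =
  if x \in S then 'X_[mnm_of_set (S :\ x)] else 0.
Proof.
rewrite mderivX mnm_of_setE; case: ifP => xS; last by rewrite scale0r.
by rewrite scale1r mnm_of_setD1.
Qed.

Lemma ev1X (m : 'X_{1..n}) : ev1 ('X_[m] : {mpoly R[n]}) = 1.
Proof. by rewrite /ev1 mevalX big1 // => i _; rewrite expr1n. Qed.

Definition upsum c T : R := \sum_(S : {set 'I_n} | T \subset S) c S.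

Definition upper_poly c T : {mpoly R[n]} :=
  \sum_(S : {set 'I_n}) (if T \subset S then c S else 0) *: 'X_[mnm_of_set (S :\: T)].

Lemma mderiv_upper_poly c T x :
  mderiv x (upper_poly c T) = if x \in T then 0 else upper_poly c (x |: T).
Proof.
rewrite /upper_poly (big_morph _ (@mderivD _ _ x) (mderiv0 _ _)); case: ifP => xT.
  by apply: big1 => S _; rewrite mderivZ mderivX_set in_setD xT scaler0.
apply: eq_bigr => S _; rewrite mderivZ mderivX_set in_setD xT /= subUset sub1set.
case: (boolP (x \in S)) => xS /=; last by rewrite scaler0 scale0r.
by rewrite setDDl setUC.
Qed.

Lemma ev1_upper_poly c T : ev1 (upper_poly c T) = upsum c T.
Proof.
rewrite /ev1 /upper_poly raddf_sum /upsum [RHS]big_mkcond /=.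
by apply: eq_bigr => S _; rewrite mevalZ -/(ev1 _) ev1X mulr1.
Qed.

Lemma foldr_mderiv_upper_poly c T (l : seq 'I_n) :
  uniq l -> all (fun x => x \notin T) l ->
  foldr (fun i q => mderiv i q) (upper_poly c T) l = upper_poly c (T :|: [set x in l]).
Proof.
elim: l T => [|a l IH] T /=.
  by move=> _ _; congr upper_poly; apply/setP=> x; rewrite !inE orbF.
move=> /andP[al ul] /andP[aT all].
rewrite IH // mderiv_upper_poly !inE (negPf aT) (negPf al) /=; congr upper_poly.
by apply/setP => x; rewrite !inE; case: (x == a); rewrite ?orbT.
Qed.

Lemma partialJ_gen_poly c K : partialJ K (gen_poly c) = upper_poly c K.
Proof.
have -> : gen_poly c = upper_poly c set0.
  rewrite /gen_poly /upper_poly; apply: eq_bigr => S _; rewrite sub0set setD0.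
  by rewrite /mnm_of_set (big_morph _ (@mpolyXD _ _) (mpolyX0 _ _)).
rewrite /partialJ foldr_mderiv_upper_poly ?enum_uniq //.
  by congr upper_poly; apply/setP => x; rewrite !inE mem_enum.
by apply/allP => x _; rewrite inE.
Qed.

Definition upgrad c K x : R := if x \in K then 0 else upsum c (x |: K).

Definition uphess c K x y : R :=
  if (x \notin K) && (y \notin x |: K) then upsum c (y |: (x |: K)) else 0.

Lemma ev1_partialJ c K : ev1 (partialJ K (gen_poly c)) = upsum c K.
Proof. by rewrite partialJ_gen_poly ev1_upper_poly. Qed.

Lemma ev1_mderiv_partialJ c K x :
  ev1 (mderiv x (partialJ K (gen_poly c))) = upgrad c K x.
Proof.
rewrite /upgrad partialJ_gen_poly mderiv_upper_poly.
by case: ifP => _; rewrite ?ev1_upper_poly // /ev1 meval0.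
Qed.

Lemma ev1_mderiv2_partialJ c K x y :
  ev1 (mderiv x (mderiv y (partialJ K (gen_poly c)))) = uphess c K x y.
Proof.
rewrite /uphess partialJ_gen_poly (mderiv_upper_poly _ _ y); case: ifP => yK.
  by rewrite mderiv0 /ev1 meval0 !inE yK orbT andbF.
rewrite mderiv_upper_poly; case: ifP => xyK.
  by rewrite /ev1 meval0; move: xyK; rewrite !inE => /orP[/eqP ->|->]; rewrite ?eqxx ?andbF.
rewrite ev1_upper_poly; move: xyK; rewrite !inE yK => /negbT; rewrite negb_or => /andP[xy xK].
by rewrite xK eq_sym (negPf xy) /= setUCA.
Qed.

Lemma uphessC c K x y : uphess c K x y = uphess c K y x.
Proof.
rewrite /uphess !inE setUCA; congr (if _ then _ else _).
by rewrite eq_sym; case: (x \in K); case: (y \in K); rewrite ?andbF //= ?orbF ?orbT ?andbT.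
Qed.
End UpperPoly.

Section QuadForm.
Variables (R : realFieldType) (T : finType).
Implicit Types (A : T -> T -> R) (b u v : T -> R).

Definition qform A u : R := \sum_x \sum_y u x * u y * A x y.
Definition lform b u : R := \sum_x u x * b x.

(* Apply the hypothesis to [u := v - t] with [t] chosen so that [lform b u = 0]:
   the quadratic part then only gains the rank-one term [t^2 * sum A]. *)
Lemma qform_bound_sharpen A b v (c : R) (m : nat) :
  0 < c -> (forall x y, A x y = A y x) ->
  (forall x, \sum_y A x y = m.+1%:R * b x) -> \sum_x b x = m.+2%:R * c ->
  (forall u, qform A u * c <= lform b u ^+ 2) ->
  m.+2%:R * qform A v * c <= m.+1%:R * lform b v ^+ 2.
Proof.
move=> c0 Asym rows sumb bound.
have mc0 : m.+2%:R * c != 0 by rewrite mulf_neq0 ?pnatr_eq0 // gt_eqF.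
set t := lform b v / (m.+2%:R * c).
pose u x := v x - t.
have vE x : v x = u x + t by rewrite /u subrK.
have lform_u : lform b u = 0.
  rewrite /lform; under eq_bigr do rewrite /u mulrBl.
  by rewrite sumrB -mulr_sumr sumb -/(lform b v) /t mulfVK ?subrr.
have qform_u : qform A u <= 0.
  by move: (bound u); rewrite lform_u expr0n /= => h; rewrite -(pmulr_rle0 _ c0) mulrC.
have rows_u : \sum_x \sum_y u x * A x y = 0.
  under eq_bigr do rewrite -mulr_sumr rows mulrCA.
  by rewrite -mulr_sumr -/(lform b u) lform_u mulr0.
have cols_u : \sum_x \sum_y u y * A x y = 0.
  rewrite exchange_big /=; under eq_bigr do (under eq_bigr do rewrite Asym).
  exact: rows_u.
have sumA : \sum_x \sum_y A x y = m.+1%:R * (m.+2%:R * c).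
  by under eq_bigr do rewrite rows; rewrite -mulr_sumr sumb.
have qform_v : qform A v = qform A u + t * (\sum_x \sum_y u x * A x y)
    + t * (\sum_x \sum_y u y * A x y) + t ^+ 2 * (\sum_x \sum_y A x y).
  rewrite /qform !mulr_sumr -!big_split /=; apply: eq_bigr => x _.
  rewrite !mulr_sumr -!big_split /=; apply: eq_bigr => y _.
  by rewrite !vE; ring.
have lform_v : lform b v = t * (m.+2%:R * c) by rewrite /t mulfVK.
rewrite qform_v rows_u cols_u sumA !mulr0 !addr0 lform_v.
have : m.+2%:R * qform A u * c <= 0.
  by rewrite -mulrA mulr_ge0_le0 ?ler0n // mulr_le0_ge0 // ltW.
have -> : m.+2%:R * (qform A u + t ^+ 2 * (m.+1%:R * (m.+2%:R * c))) * c
   = m.+2%:R * qform A u * c + m.+1%:R * (t * (m.+2%:R * c)) ^+ 2 by ring.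
lra.
Qed.
End QuadForm.

Lemma slc_qform_le (R : realType) (n : nat) (pi : {set 'I_n} -> R) K u :
  strongly_log_concave pi -> 0 < upsum pi K ->
  qform (uphess pi K) u * upsum pi K <= lform (upgrad pi K) u ^+ 2.
Proof.
move=> slc c0.
have := slc K; rewrite ev1_partialJ => /(_ c0 u); rewrite /hess_log1 ev1_partialJ.
under eq_bigr do under eq_bigr do rewrite ev1_mderiv2_partialJ !ev1_mderiv_partialJ.
move: c0; move: (upsum pi K) => c c0.
have -> : \sum_i \sum_j u i * u j * (uphess pi K i j / c - upgrad pi K i * upgrad pi K j / c ^+ 2)
   = (qform (uphess pi K) u * c - lform (upgrad pi K) u ^+ 2) / c ^+ 2.
  rewrite /qform /lform [X in _ - X]expr2 [X in _ - X]mulr_suml [X in X - _]mulr_suml.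
  rewrite -sumrB mulr_suml; apply: eq_bigr => i _.
  rewrite [X in _ - X]mulr_sumr [X in X - _]mulr_suml -sumrB mulr_suml.
  by apply: eq_bigr => j _; field; rewrite gt_eqF.
by rewrite pmulr_lle0 ?invr_gt0 ?exprn_gt0 // subr_le0.
Qed.

Section SetSums.
Variables (R : pzSemiRingType) (T : finType).
Implicit Types (F : {set T} -> R) (J K : {set T}) (x y : T).

Lemma sum_setU1_notin (m : nat) x F :
  \sum_(K : {set T} | (#|K| == m) && (x \notin K)) F (x |: K) =
  \sum_(J : {set T} | (#|J| == m.+1) && (x \in J)) F J.
Proof.
rewrite [RHS](reindex_onto (fun K => x |: K) (fun J => J :\ x)) /=; last first.
  by move=> J /andP[_ xJ]; rewrite setD1K.
apply: eq_bigl => K; rewrite setU11 andbT.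
case: (boolP (x \in K)) => xK /=.
  rewrite andbF; apply/esym/negbTE; apply/negP => /andP[_ /eqP eK].
  by move: xK; rewrite -eK !inE eqxx.
by rewrite cardsU1 xK add1n eqSS setU1K // eqxx andbT.
Qed.

Lemma sum_card_setU1 (m : nat) F :
  \sum_(K : {set T} | #|K| == m) \sum_(y | y \notin K) F (y |: K) =
  m.+1%:R * \sum_(I : {set T} | #|I| == m.+1) F I.
Proof.
rewrite (exchange_big_dep predT) //=.
under eq_bigr do rewrite sum_setU1_notin.
rewrite (exchange_big_dep (fun I : {set T} => #|I| == m.+1)) /=; last by move=> y I _ /andP[].
rewrite mulr_sumr; apply: eq_bigr => I /eqP cI.
rewrite sumr_const mulr_natl; congr (_ *+ _).
by rewrite -[in RHS]cI; apply: eq_card => y; rewrite -topredE /= cI eqxx.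
Qed.

Lemma sum_card_setU1_setU1 (m : nat) F :
  \sum_(K : {set T} | #|K| == m) \sum_(x | x \notin K) \sum_(y | y \notin x |: K)
     F (y |: (x |: K)) =
  (m.+1 * m.+2)%:R * \sum_(I : {set T} | #|I| == m.+2) F I.
Proof.
rewrite (sum_card_setU1 m (fun J => \sum_(y | y \notin J) F (y |: J))).
by rewrite sum_card_setU1 natrM mulrA.
Qed.

Lemma sum_superset_succ J F :
  \sum_(I : {set T} | (#|I| == #|J|.+1) && (J \subset I)) F I =
  \sum_(y | y \notin J) F (y |: J).
Proof.
rewrite [RHS](eq_bigr (fun y => \sum_(I : {set T} | I == y |: J) F I)); last first.
  by move=> y _; rewrite big_pred1_eq.
rewrite (exchange_big_dep (fun I : {set T} => (#|I| == #|J|.+1) && (J \subset I))) /=.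
  apply: eq_bigr => I /andP[/eqP cI JI].
  have /cards1P[z eIz] : #|I :\: J| == 1%N.
    by rewrite cardsD (setIidPr JI) cI subSn // subnn.
  have : z \in I :\: J by rewrite eIz set11.
  rewrite inE => /andP[zJ zI].
  rewrite (eq_bigl (pred1 z)) ?big_pred1_eq // => y /=; apply/idP/idP.
    case/andP => yJ /eqP eI.
    have : y \in I :\: J by rewrite eI !inE eqxx yJ.
    by rewrite eIz inE.
  move/eqP ->; rewrite zJ /= eq_sym eqEcard cardsU1 zJ add1n cI leqnn andbT.
  by rewrite subUset sub1set zI JI.
move=> y I yJ /eqP ->; rewrite cardsU1 yJ add1n eqxx /=.
by apply/subsetP => z zJ; rewrite !inE zJ orbT.
Qed.

Lemma sum_setU1_pairC K (F : T -> T -> R) :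
  \sum_(x | x \notin K) \sum_(y | y \notin x |: K) F x y =
  \sum_(x | x \notin K) \sum_(y | y \notin x |: K) F y x.
Proof.
have cond (G : T -> T -> R) : \sum_(x | x \notin K) \sum_(y | y \notin x |: K) G x y =
    \sum_x \sum_y (if (x \notin K) && (y \notin x |: K) then G x y else 0).
  rewrite big_mkcond; apply: eq_bigr => x _.
  by case: (x \in K) => /=; [rewrite big1 | rewrite big_mkcond].
rewrite !cond exchange_big /=; apply: eq_bigr => x _; apply: eq_bigr => y _.
congr (if _ then _ else _); rewrite !inE.
by case: (x \in K); case: (y \in K); rewrite ?andbF ?orbT ?orbF //= eq_sym.
Qed.
End SetSums.

Lemma xlogxE (R : realType) (x : R) : xlogx x = x * ln x.
Proof. by rewrite /xlogx; case: eqP => [->|]; rewrite ?mul0r. Qed.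

Lemma sub_le_xlogx_ln (R : realType) (a b : R) : 0 < a -> 0 < b ->
  a - b <= xlogx a - a * ln b.
Proof.
move=> a0 b0; have ba0 : 0 < b / a by rewrite divr_gt0.
have : ln (b / a) <= b / a - 1.
  by have := @le_ln1Dx _ (b / a - 1); rewrite [1 + _]addrC subrK; apply; lra.
rewrite ln_div ?posrE // xlogxE => /(ler_wpM2l (ltW a0)).
rewrite mulrBr mulrBr mulrCA divff ?gt_eqF // !mulr1; lra.
Qed.

Lemma convex0_ratio_mono (R : realFieldType) (e : nat -> R) (k : nat) : e 0%N = 0 ->
  (forall i, (i.+2 <= k)%N -> 2%:R * e i.+1 <= e i.+2 + e i) ->
  forall j, (j < k)%N -> j.+1%:R * e j <= j%:R * e j.+1.
Proof.
move=> e0 convex; elim=> [|j IH] jk; first by rewrite e0 !mulr0 mul0r.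
have := IH (ltnW jk); have := convex j jk.
rewrite -[j.+2]addn2 -[j.+1]addn1 !natrD => h1 h2.
have h3 := ler_wpM2l (_ : 0 <= j%:R + 1) h1.
have j0 : 0 <= j%:R :> R by rewrite ler0n.
nra.
Qed.

Section Weights.
Variables (R : realType) (n r : nat) (pi : {set 'I_n} -> R).
Hypothesis pi_ge0 : forall S, 0 <= pi S.
Hypothesis pi_hom : homogeneous r pi.
Hypothesis pi_sum1 : \sum_S pi S = 1.
Hypothesis pi_slc : strongly_log_concave pi.

Local Notation w := (wgt r pi).
Implicit Types (I J K S B : {set 'I_n}) (x y : 'I_n) (g : {set 'I_n} -> R).

Lemma wgtE I : w I = (r - #|I|)`!%:R * upsum pi I.
Proof. by []. Qed.

Lemma wgt_ge0 I : 0 <= w I.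
Proof. by rewrite wgtE mulr_ge0 ?sumr_ge0. Qed.

Lemma indep_subset I J : J \subset I -> indep pi I -> indep pi J.
Proof.
move=> JI /existsP[B /andP[pB IB]]; apply/existsP; exists B.
by rewrite pB (subset_trans JI IB).
Qed.

Lemma upsum_gt0E I : (0 < upsum pi I) = indep pi I.
Proof.
apply/idP/idP => [|/existsP[B /andP[pB IB]]].
  apply: contraTT => /existsPn nI; rewrite -leNgt /upsum big1 // => B IB.
  by apply/eqP; rewrite eq_le pi_ge0 andbT leNgt; have := nI B; rewrite IB andbT.
by apply: (lt_le_trans pB); rewrite /upsum (bigD1 B) //= lerDl sumr_ge0.
Qed.

Lemma wgt_gt0E I : (0 < w I) = indep pi I.
Proof. by rewrite wgtE pmulr_rgt0 ?upsum_gt0E // ltr0n fact_gt0. Qed.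

Lemma wgt_eq0 I : ~~ indep pi I -> w I = 0.
Proof. by rewrite -wgt_gt0E lt_neqAle wgt_ge0 andbT negbK eq_sym => /eqP. Qed.

(* Homogeneity: a basis [B \supseteq J] contains exactly [r - #|J|] elements outside [J]. *)
Lemma sum_upsum_setU1 J :
  \sum_(y | y \notin J) upsum pi (y |: J) = (r - #|J|)%:R * upsum pi J.
Proof.
rewrite /upsum (exchange_big_dep (fun B => J \subset B)) /=; last first.
  by move=> y B _; rewrite subUset => /andP[].
rewrite mulr_sumr; apply: eq_bigr => B JB; rewrite sumr_const.
have [->|pB] := eqVneq (pi B) 0; first by rewrite mul0rn mulr0.
have -> : #|J| = #|B :&: J| by rewrite (setIidPr JB).
rewrite mulr_natl -(pi_hom pB) -cardsD; congr (_ *+ _).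
by apply: eq_card => y; rewrite !inE -topredE /= subUset sub1set JB andbT.
Qed.

Lemma sum_wgt_setU1 J : (#|J| < r)%N -> \sum_(y | y \notin J) w (y |: J) = w J.
Proof.
move=> Jr; have [m em] : exists m, (r - #|J|)%N = m.+1.
  by exists (r - #|J|).-1; rewrite prednK // subn_gt0.
rewrite (eq_bigr (fun y => m`!%:R * upsum pi (y |: J))); last first.
  by move=> y yJ; rewrite wgtE cardsU1 yJ add1n subnS em.
by rewrite -mulr_sumr sum_upsum_setU1 mulrA -natrM em [RHS]wgtE em mulnC -factS.
Qed.

Lemma sum_Mk_wgt (j : nat) (P : pred {set 'I_n}) (F : {set 'I_n} -> R) :
  \sum_(I in Mk pi j | P I) w I * F I =
  \sum_(I : {set 'I_n} | (#|I| == j) && P I) w I * F I.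
Proof.
rewrite [RHS](bigID (indep pi)) /= [X in _ + X]big1 ?addr0; last first.
  by move=> I /andP[_ nI]; rewrite wgt_eq0 // mul0r.
apply: eq_bigl => I; rewrite /Mk inE.
by case: (indep pi I); case: (#|I| == j); case: (P I).
Qed.

Lemma PupE (j : nat) g J : #|J|.+1 = j ->
  Pup r pi j g J = \sum_(y | y \notin J) w (y |: J) / w J * g (y |: J).
Proof.
move=> cJ; rewrite /Pup.
have e I : w I / w J * g I = w I * (g I / w J) by rewrite mulrAC -mulrA.
under eq_bigr do rewrite e.
by rewrite sum_Mk_wgt -cJ sum_superset_succ; apply: eq_bigr => y _; rewrite e.
Qed.

Lemma wgt_mul_Pup (j : nat) g J : #|J|.+1 = j ->
  w J * Pup r pi j g J = \sum_(y | y \notin J) w (y |: J) * g (y |: J).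
Proof.
move=> cJ; rewrite PupE // mulr_sumr.
have [wJ0|wJ0] := eqVneq (w J) 0.
  rewrite wJ0 [LHS]big1 => [|y _]; last by rewrite mul0r.
  apply/esym/big1 => y yJ; rewrite wgt_eq0 ?mul0r //.
  by apply/negP => /(indep_subset (subsetUr [set y] J)); rewrite -wgt_gt0E wJ0 ltxx.
by apply: eq_bigr => y _; rewrite mulrA mulrCA divff // mulr1.
Qed.

Lemma Pup_ge0 (j : nat) g J :
  (forall I, I \in Mk pi j -> 0 <= g I) -> 0 <= Pup r pi j g J.
Proof.
move=> g0; apply: sumr_ge0 => I /andP[IM _].
by rewrite mulr_ge0 ?divr_ge0 ?wgt_ge0 ?g0.
Qed.

Lemma Pup_ge_term (j : nat) g J z :
  (forall I, I \in Mk pi j -> 0 <= g I) -> #|J|.+1 = j -> z \notin J ->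
  w (z |: J) / w J * g (z |: J) <= Pup r pi j g J.
Proof.
move=> g0 cJ zJ; rewrite PupE // (bigD1 z) //= lerDl.
apply: sumr_ge0 => y /andP[yJ _].
have [iyJ|niyJ] := boolP (indep pi (y |: J)); last by rewrite wgt_eq0 // !mul0r.
by rewrite mulr_ge0 ?divr_ge0 ?wgt_ge0 // g0 // inE iyJ cardsU1 yJ add1n cJ /=.
Qed.

Lemma Pup_gt0 (j : nat) g J z :
  (forall I, I \in Mk pi j -> 0 <= g I) -> #|J|.+1 = j -> z \notin J ->
  0 < w (z |: J) -> 0 < g (z |: J) -> 0 < Pup r pi j g J.
Proof.
move=> g0 cJ zJ wzJ gzJ; apply: lt_le_trans (Pup_ge_term g0 cJ zJ).
have wJ : 0 < w J.
  by move: wzJ; rewrite !wgt_gt0E; apply: indep_subset; apply: subsetUr.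
by rewrite mulr_gt0 ?divr_gt0.
Qed.

Definition wsum (j : nat) : R := \sum_(I : {set 'I_n} | #|I| == j) w I.
Definition wsum_mul (j : nat) g : R := \sum_(I : {set 'I_n} | #|I| == j) w I * g I.
Definition wsum_xlogx (j : nat) g : R :=
  \sum_(I : {set 'I_n} | #|I| == j) w I * xlogx (g I).

Lemma wsumS (j : nat) : (j < r)%N -> wsum j = j.+1%:R * wsum j.+1.
Proof.
move=> jr; rewrite /wsum -sum_card_setU1; apply: eq_bigr => J /eqP cJ.
by rewrite sum_wgt_setU1 // cJ.
Qed.

Lemma wsum_mul_Pup (j : nat) g : wsum_mul j (Pup r pi j.+1 g) = j.+1%:R * wsum_mul j.+1 g.
Proof.
rewrite /wsum_mul -sum_card_setU1; apply: eq_bigr => J /eqP cJ.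
by rewrite wgt_mul_Pup // cJ.
Qed.

Lemma wsum0 : wsum 0 = r`!%:R.
Proof.
rewrite /wsum (eq_bigl (pred1 set0)) ?big_pred1_eq; last by move=> I; rewrite cards_eq0.
rewrite wgtE cards0 subn0 /upsum (eq_bigl predT) ?pi_sum1 ?mulr1 // => B.
by rewrite sub0set.
Qed.

Lemma wsum_gt0 (j : nat) : (j <= r)%N -> 0 < wsum j.
Proof.
elim: j => [|j IH] jr; first by rewrite wsum0 ltr0n fact_gt0.
by have := IH (ltnW jr); rewrite wsumS // pmulr_rgt0 // ltr0n.
Qed.

Lemma wsum_mean_Pup (j : nat) g : (j < r)%N ->
  wsum_mul j (Pup r pi j.+1 g) / wsum j = wsum_mul j.+1 g / wsum j.+1.
Proof.
move=> jr; rewrite wsum_mul_Pup wsumS // -mulf_div divff ?mul1r //.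
by rewrite pnatr_eq0.
Qed.

Lemma sum_Mk_pik (j : nat) (F : {set 'I_n} -> R) :
  \sum_(I in Mk pi j) pik r pi j I * F I =
  (\sum_(I : {set 'I_n} | #|I| == j) w I * F I) / wsum j.
Proof.
have pikE I : pik r pi j I = w I / wsum j.
  rewrite /pik /wsum; congr (_ / _).
  transitivity (\sum_(I in Mk pi j | predT I) w I * 1).
    by apply: eq_big => [J|J _]; rewrite ?andbT ?mulr1.
  by rewrite sum_Mk_wgt; apply: eq_big => [J|J _]; rewrite ?andbT ?mulr1.
transitivity (\sum_(I in Mk pi j | predT I) w I * (F I / wsum j)).
  by apply: eq_big => [I|I _]; rewrite ?andbT // pikE mulrAC -mulrA.
by rewrite sum_Mk_wgt mulr_suml; apply: eq_big => [I|I _]; rewrite ?andbT // mulrA.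
Qed.

Lemma Ent_levelE (j : nat) g :
  Ent (Mk pi j) (pik r pi j) g =
  wsum_xlogx j g / wsum j - xlogx (wsum_mul j g / wsum j).
Proof. by rewrite /Ent !sum_Mk_pik. Qed.

Lemma Ent_level0 g : Ent (Mk pi 0) (pik r pi 0) g = 0.
Proof.
have sum0 (F : {set 'I_n} -> R) : \sum_(I : {set 'I_n} | #|I| == 0%N) F I = F set0.
  by rewrite (eq_bigl (pred1 set0)) ?big_pred1_eq // => I; rewrite cards_eq0.
have w0 : w set0 != 0 by rewrite -sum0 -/(wsum 0) wsum0 pnatr_eq0 -lt0n fact_gt0.
by rewrite Ent_levelE /wsum_xlogx /wsum_mul /wsum !sum0 ![w set0 * _]mulrC !mulfK // subrr.
Qed.

Lemma sum_uphess_row K x (m : nat) : (r - #|K| = m.+2)%N ->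
  \sum_y uphess pi K x y = m.+1%:R * upgrad pi K x.
Proof.
move=> rK; rewrite /uphess /upgrad; case: (boolP (x \in K)) => xK /=.
  by rewrite mulr0 big1.
by rewrite -big_mkcond /= sum_upsum_setU1 cardsU1 xK add1n subnS rK.
Qed.

Lemma sum_upgrad K : \sum_x upgrad pi K x = (r - #|K|)%:R * upsum pi K.
Proof.
rewrite -sum_upsum_setU1 [RHS]big_mkcond; apply: eq_bigr => x _.
by rewrite /upgrad; case: (x \in K).
Qed.

Lemma sum_wgt_setU1_lform K (v : 'I_n -> R) (m : nat) : (r - #|K| = m.+1)%N ->
  \sum_(x | x \notin K) w (x |: K) * v x = m`!%:R * lform (upgrad pi K) v.
Proof.
move=> rK; rewrite /lform mulr_sumr [LHS]big_mkcond; apply: eq_bigr => x _.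
rewrite /upgrad; case: (boolP (x \in K)) => xK /=; first by rewrite !mulr0.
by rewrite wgtE cardsU1 xK add1n subnS rK /=; ring.
Qed.

Lemma sum_wgt_pairs_qform K (v : 'I_n -> R) (m : nat) : (r - #|K| = m.+2)%N ->
  \sum_(x | x \notin K) \sum_(y | y \notin x |: K) w (y |: (x |: K)) * (v x * v y) =
  m`!%:R * qform (uphess pi K) v.
Proof.
move=> rK; rewrite /qform mulr_sumr [LHS]big_mkcond; apply: eq_bigr => x _.
case: (boolP (x \in K)) => xK /=.
  by rewrite big1 ?mulr0 // => y _; rewrite /uphess xK mulr0.
rewrite mulr_sumr [LHS]big_mkcond; apply: eq_bigr => y _; rewrite /uphess xK /=.
case: ifP => yK /=; last by rewrite !mulr0.
by rewrite wgtE cardsU1 yK cardsU1 xK !add1n subnS subnS rK /=; ring.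
Qed.

(* Strong log-concavity of [partial_K g] at the all-ones vector, sharpened by
   [qform_bound_sharpen] (whose row-sum hypothesis is Euler's identity for the
   homogeneous [partial_K g]) and rescaled by factorials to the weights [w]. *)
Lemma wgt_pairs_le_sqr K (v : 'I_n -> R) : (#|K|.+2 <= r)%N -> 0 < w K ->
  (\sum_(x | x \notin K) \sum_(y | y \notin x |: K) w (y |: (x |: K)) * (v x * v y)) * w K
  <= (\sum_(x | x \notin K) w (x |: K) * v x) ^+ 2.
Proof.
move=> Kr wK0; have c0 : 0 < upsum pi K by rewrite upsum_gt0E -wgt_gt0E.
have [m rK] : exists m, (r - #|K| = m.+2)%N by exists (r - #|K| - 2)%N; lia.
have sumb : \sum_x upgrad pi K x = m.+2%:R * upsum pi K by rewrite sum_upgrad rK.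
have := qform_bound_sharpen v c0 (@uphessC _ _ pi K) (fun x => sum_uphess_row x rK) sumb
  (fun u => slc_qform_le u pi_slc c0).
rewrite (sum_wgt_pairs_qform _ rK) (sum_wgt_setU1_lform _ rK) [w K]wgtE rK !factS !natrM.
set Q := qform _ v; set L := lform _ v; set a := (m`!%:R : R) => h.
have a0 : 0 <= a ^+ 2 * m.+1%:R by rewrite mulr_ge0 ?exprn_ge0 ?ler0n.
have -> : a * Q * (m.+2%:R * (m.+1%:R * a) * upsum pi K)
  = a ^+ 2 * m.+1%:R * (m.+2%:R * Q * upsum pi K) by ring.
have -> : (m.+1%:R * a * L) ^+ 2 = a ^+ 2 * m.+1%:R * (m.+1%:R * L ^+ 2) by ring.
exact: ler_wpM2l.
Qed.

Section Level.
Variables (i : nat) (g : {set 'I_n} -> R).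
Hypothesis ir : (i.+2 <= r)%N.
Hypothesis g_ge0 : forall I, I \in Mk pi i.+2 -> 0 <= g I.
Local Notation G := (Pup r pi i.+2 g).
Local Notation H := (Pup r pi i.+1 G).

Let G_ge0 J : 0 <= G J.
Proof. exact: Pup_ge0. Qed.

Let H_ge0 K : 0 <= H K.
Proof. by apply: Pup_ge0 => I _; apply: G_ge0. Qed.

Section Star.
Variable K : {set 'I_n}.
Hypothesis cK : #|K| = i.

Lemma sum_pairs_wgt_Pup2 :
  \sum_(x | x \notin K) \sum_(y | y \notin x |: K) w (y |: (x |: K)) * g (y |: (x |: K))
  = w K * H K.
Proof.
rewrite wgt_mul_Pup ?cK //; apply: eq_bigr => x xK.
by rewrite wgt_mul_Pup // cardsU1 xK cK.
Qed.

Lemma sum_pairs_ln_Pup :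
  \sum_(x | x \notin K) \sum_(y | y \notin x |: K)
     w (y |: (x |: K)) * g (y |: (x |: K)) * ln (G (x |: K))
  = \sum_(x | x \notin K) w (x |: K) * xlogx (G (x |: K)).
Proof.
apply: eq_bigr => x xK; rewrite -mulr_suml -(@wgt_mul_Pup i.+2) ?xlogxE ?mulrA //.
by rewrite cardsU1 xK cK.
Qed.

Lemma sum_pairs_ratio_le :
  \sum_(x | x \notin K) \sum_(y | y \notin x |: K)
     w (y |: (x |: K)) * (G (x |: K) * G (y |: K) / H K)
  <= w K * H K.
Proof.
under eq_bigr do under eq_bigr do rewrite mulrA.
under eq_bigr do rewrite -mulr_suml.
rewrite -mulr_suml.
have [HK0|HK0] := eqVneq (H K) 0; first by rewrite HK0 invr0 !mulr0.
have HK : 0 < H K by rewrite lt_neqAle eq_sym HK0 H_ge0.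
have [wK0|wK0] := eqVneq (w K) 0.
  move: HK0; rewrite PupE ?cK // big1 ?eqxx // => z _.
  by rewrite wK0 invr0 mulr0 mul0r.
have wK : 0 < w K by rewrite lt_neqAle eq_sym wK0 wgt_ge0.
have Kr : (#|K|.+2 <= r)%N by rewrite cK.
have := wgt_pairs_le_sqr (fun z => G (z |: K)) Kr wK.
rewrite -(@wgt_mul_Pup i.+1 G K) ?cK // => h.
rewrite ler_pdivrMr //; rewrite -(ler_pM2r wK); apply: le_trans h _.
by rewrite [X in _ <= X](_ : _ = (w K * H K) ^+ 2) //; ring.
Qed.

(* Gibbs' inequality [a - b <= a ln (a / b)] with [a = g I] and
   [b = G (x |: K) * G (y |: K) / H K], for the flag [K < x |: K < I]. *)
Lemma gibbs_pair_term x y : x \notin K -> y \notin x |: K ->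
  w (y |: (x |: K)) * (g (y |: (x |: K)) - G (x |: K) * G (y |: K) / H K)
  <= w (y |: (x |: K)) * xlogx (g (y |: (x |: K)))
     - w (y |: (x |: K)) * g (y |: (x |: K)) * ln (G (x |: K))
     - w (y |: (x |: K)) * g (y |: (x |: K)) * ln (G (y |: K))
     + w (y |: (x |: K)) * g (y |: (x |: K)) * ln (H K).
Proof.
move=> xK yxK; set I := y |: (x |: K).
have cxK : #|x |: K| = i.+1 by rewrite cardsU1 xK cK.
have cI : #|I| = i.+2 by rewrite /I cardsU1 yxK cxK.
have /andP[yx yK] : (y != x) && (y \notin K) by move: yxK; rewrite !inE negb_or.
have xyK : x \notin y |: K by rewrite !inE negb_or eq_sym yx xK.
have cyK : #|y |: K| = i.+1 by rewrite cardsU1 yK cK.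
have eI : x |: (y |: K) = I by rewrite /I setUCA.
have [wI0|wI0] := eqVneq (w I) 0; first by rewrite wI0 !mul0r !(subr0, addr0).
have wI : 0 < w I by rewrite lt_neqAle eq_sym wI0 wgt_ge0.
have gI0 : 0 <= g I by apply: g_ge0; rewrite inE -wgt_gt0E wI cI eqxx.
have [gI|gI] := eqVneq (g I) 0.
  rewrite gI /xlogx eqxx !mulr0 !mul0r !subr0 addr0 add0r.
  have b0 : 0 <= G (x |: K) * G (y |: K) / H K.
    by apply: divr_ge0; [apply: mulr_ge0; apply: G_ge0 | apply: H_ge0].
  by rewrite mulrN oppr_le0 mulr_ge0 ?wgt_ge0.
have {gI0}gI : 0 < g I by rewrite lt_neqAle eq_sym gI gI0.
have wxK : 0 < w (x |: K).
  by move: wI; rewrite !wgt_gt0E; apply: indep_subset; apply: subsetUr.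
have GxK : 0 < G (x |: K) by apply: Pup_gt0 yxK _ _ => //; rewrite cxK.
have GyK : 0 < G (y |: K) by apply: Pup_gt0 xyK _ _ => //; rewrite ?cyK ?eI.
have HK : 0 < H K by apply: Pup_gt0 xK _ _ => //; rewrite cK.
have b0 : 0 < G (x |: K) * G (y |: K) / H K by rewrite divr_gt0 ?mulr_gt0.
have := ler_wpM2l (ltW wI) (sub_le_xlogx_ln gI b0).
rewrite ln_div ?posrE ?mulr_gt0 // lnM ?posrE // => h.
lra.
Qed.

Lemma sum_pairs_ln_Pup_swap :
  \sum_(x | x \notin K) \sum_(y | y \notin x |: K)
     w (y |: (x |: K)) * g (y |: (x |: K)) * ln (G (y |: K))
  = \sum_(x | x \notin K) w (x |: K) * xlogx (G (x |: K)).
Proof.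
rewrite -sum_pairs_ln_Pup sum_setU1_pairC; apply: eq_bigr => x _.
by apply: eq_bigr => y _; rewrite setUCA.
Qed.

Lemma sum_pairs_ln_Pup2 :
  \sum_(x | x \notin K) \sum_(y | y \notin x |: K)
     w (y |: (x |: K)) * g (y |: (x |: K)) * ln (H K)
  = w K * xlogx (H K).
Proof.
under eq_bigr do rewrite -mulr_suml.
by rewrite -mulr_suml sum_pairs_wgt_Pup2 xlogxE mulrA.
Qed.

Lemma star_xlogx_convex :
  2%:R * \sum_(x | x \notin K) w (x |: K) * xlogx (G (x |: K))
  <= \sum_(x | x \notin K) \sum_(y | y \notin x |: K)
        w (y |: (x |: K)) * xlogx (g (y |: (x |: K)))
     + w K * xlogx (H K).
Proof.
have gap : 0 <= \sum_(x | x \notin K) \sum_(y | y \notin x |: K)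
    w (y |: (x |: K)) * (g (y |: (x |: K)) - G (x |: K) * G (y |: K) / H K).
  under eq_bigr do under eq_bigr do rewrite mulrBr.
  under eq_bigr do rewrite sumrB.
  by rewrite sumrB sum_pairs_wgt_Pup2 subr_ge0 sum_pairs_ratio_le.
rewrite -subr_ge0; apply: (le_trans gap); apply: le_trans (ler_sum _ (fun x xK =>
  ler_sum _ (fun y => gibbs_pair_term (x := x) (y := y) xK))) _.
under eq_bigr do rewrite big_split /= !sumrB.
rewrite big_split /= !sumrB.
rewrite sum_pairs_ln_Pup sum_pairs_ln_Pup_swap sum_pairs_ln_Pup2; lra.
Qed.
End Star.

Lemma wsum_xlogx_convex :
  2%:R * (i.+1%:R * wsum_xlogx i.+1 G)
  <= (i.+1 * i.+2)%:R * wsum_xlogx i.+2 g + wsum_xlogx i H.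
Proof.
rewrite /wsum_xlogx -sum_card_setU1 -sum_card_setU1_setU1 mulr_sumr -big_split /=.
by apply: ler_sum => K /eqP cK; apply: star_xlogx_convex.
Qed.

Lemma Ent_Pup_convex :
  2%:R * Ent (Mk pi i.+1) (pik r pi i.+1) G
  <= Ent (Mk pi i.+2) (pik r pi i.+2) g + Ent (Mk pi i) (pik r pi i) H.
Proof.
have ir' : (i < r)%N by apply: leq_trans ir.
rewrite !Ent_levelE (wsum_mean_Pup _ ir') (wsum_mean_Pup _ ir).
rewrite (wsumS ir') (wsumS ir).
have := wsum_xlogx_convex; have := wsum_gt0 ir; rewrite natrM.
move: (wsum_xlogx _ _) (wsum_xlogx _ _) (wsum_xlogx _ _) (wsum i.+2) => E0 E2 E1 Z Z0 h.
have a1 : 0 < i.+1%:R :> R by rewrite ltr0n.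
have a2 : 0 < i.+2%:R :> R by rewrite ltr0n.
rewrite -subr_ge0; set X := xlogx _.
have -> : E2 / Z - X + (E0 / (i.+1%:R * (i.+2%:R * Z)) - X) - 2%:R * (E1 / (i.+2%:R * Z) - X)
    = (i.+1%:R * i.+2%:R * E2 + E0 - 2%:R * (i.+1%:R * E1)) / (i.+1%:R * i.+2%:R * Z).
  by field; rewrite gt_eqF // nat1r -natrD !pnatr_eq0.
by rewrite divr_ge0 ?subr_ge0 // ltW // !mulr_gt0.
Qed.
End Level.

Section Descent.
Variables (k : nat) (f : {set 'I_n} -> R).
Hypothesis kr : (k <= r)%N.
Hypothesis f_ge0 : forall I, I \in Mk pi k -> 0 <= f I.

Fixpoint Pdown (d : nat) : {set 'I_n} -> R :=
  if d is d'.+1 then Pup r pi (k - d') (Pdown d') else f.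

Lemma Pdown_ge0 d I : I \in Mk pi (k - d) -> 0 <= Pdown d I.
Proof.
elim: d I => [|d IH] I /=; first by rewrite subn0; apply: f_ge0.
by move=> _; apply: Pup_ge0.
Qed.

Definition Ent_down (j : nat) : R := Ent (Mk pi j) (pik r pi j) (Pdown (k - j)).

Lemma Ent_down0 : Ent_down 0 = 0.
Proof. exact: Ent_level0. Qed.

Lemma Ent_down_convex i : (i.+2 <= k)%N ->
  2%:R * Ent_down i.+1 <= Ent_down i.+2 + Ent_down i.
Proof.
move=> ik; rewrite /Ent_down.
have -> : (k - i = (k - i.+2).+2)%N by lia.
have -> : (k - i.+1 = (k - i.+2).+1)%N by lia.
have ki : (k - (k - i.+2) = i.+2)%N by lia.
rewrite /= ki (_ : k - (k - i.+2).+1 = i.+1)%N; last by lia.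
apply: Ent_Pup_convex; first exact: leq_trans ik kr.
by move=> I HI; apply: Pdown_ge0; rewrite ki.
Qed.
End Descent.
End Weights.

Theorem lemma4p3 (R : realType) (n r k : nat) (pi : {set 'I_n} -> R)
  (f : {set 'I_n} -> R) :
  is_distribution pi ->
  homogeneous r pi ->
  strongly_log_concave pi ->
  (2 <= k)%N -> (k <= r)%N ->
  (forall I, I \in Mk pi k -> 0 <= f I) ->
  (k%:R / (k.-1)%:R) * Ent (Mk pi k.-1) (pik r pi k.-1) (Pup r pi k f)
    <= Ent (Mk pi k) (pik r pi k) f.
Proof.
case=> pi_ge0 pi_sum1 pi_hom pi_slc k2 kr f_ge0.
have k1 : 0 < k.-1%:R :> R by rewrite ltr0n; lia.
have km1 : (k.-1 < k)%N by lia.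
have := convex0_ratio_mono (Ent_down0 r pi_ge0 pi_sum1 k f)
  (Ent_down_convex pi_ge0 pi_hom pi_sum1 pi_slc kr f_ge0) km1.
rewrite prednK ?(ltnW k2) // /Ent_down subnn (_ : k - k.-1 = 1)%N /= ?subn0; last by lia.
by rewrite mulrAC ler_pdivrMr // [X in _ <= X]mulrC.
Qed.
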